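(* Let $G$ be a finitely generated group and $A$ a finitely generated abelian group on which $G$ acts with finite image in $\mathrm{Aut}(A)$. If a $2$-cocycle $\sigma:G\times G\to A$ is either right weakly bounded or left weakly bounded, then $\sigma$ is cohomologous to a $2$-cocycle that is both right and left weakly bounded.
   Context: The action is written $a\mapsto a^g$. A $2$-cocycle is $\sigma:G\times G\to A$ with $\sigma(g,h_1h_2)=\sigma(g,h_1)^{h_2}+\sigma(gh_1,h_2)-\sigma(h_1,h_2)$; two cocycles are cohomologous if they differ by $(g,h)\mapsto f(g)^h+f(h)-f(gh)$ for some $f:G\to A$. A cocycle $\sigma$ is left weakly bounded if $\sigma(g,G)$ is finite for every $g\in G$, and right weakly bounded if $\sigma(G,g)$ is finite for every $g\in G$. *)

From Stdlib Require List.
From mathcomp Require Import all_boot all_algebra.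
Set Implicit Arguments. Unset Strict Implicit. Unset Printing Implicit Defensive.
Import GRing.Theory.
Local Open Scope ring_scope.

Record group_law (G : Type) := GroupLaw {
  gmul : G -> G -> G;
  gone : G;
  ginv : G -> G;
  gmulA : forall x y z, gmul x (gmul y z) = gmul (gmul x y) z;
  gmul1 : forall x, gmul gone x = x;
  gmulV : forall x, gmul (ginv x) x = gone
}.

Inductive generated (G : Type) (L : group_law G) (S : list G) : G -> Prop :=
  | gen_base x : List.In x S -> generated L S x
  | gen_one : generated L S (gone L)
  | gen_inv x : generated L S x -> generated L S (ginv L x)
  | gen_mul x y : generated L S x -> generated L S y -> generated L S (gmul L x y).

Definition fin_gen_group (G : Type) (L : group_law G) : Prop :=
  exists S : list G, forall g, generated L S g.

Definition fin_gen_zmod (A : zmodType) : Prop :=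
  exists gens : seq A, forall a : A,
    exists k : nat -> int, a = \sum_(i < size gens) gens`_i *~ k i.

Definition is_action (G : Type) (L : group_law G) (A : zmodType)
  (act : A -> G -> A) : Prop :=
  [/\ forall a, act a (gone L) = a,
      forall a g h, act (act a g) h = act a (gmul L g h)
    & forall a b g, act (a + b) g = act a g + act b g].

Definition finite_image (G : Type) (A : zmodType) (act : A -> G -> A) : Prop :=
  exists s : list (A -> A), forall g, exists2 f, List.In f s & forall a, act a g = f a.

Definition cocycle2 (G : Type) (L : group_law G) (A : zmodType)
  (act : A -> G -> A) (sigma : G -> G -> A) : Prop :=
  forall g h1 h2,
    sigma g (gmul L h1 h2) =
      act (sigma g h1) h2 + sigma (gmul L g h1) h2 - sigma h1 h2.

Definition cohomologous (G : Type) (L : group_law G) (A : zmodType)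
  (act : A -> G -> A) (sigma sigma' : G -> G -> A) : Prop :=
  exists f : G -> A, forall g h,
    sigma' g h - sigma g h = act (f g) h + f h - f (gmul L g h).

Definition left_weakly_bounded (G : Type) (A : zmodType) (sigma : G -> G -> A) : Prop :=
  forall g, exists s : seq A, forall h, sigma g h \in s.

Definition right_weakly_bounded (G : Type) (A : zmodType) (sigma : G -> G -> A) : Prop :=
  forall g, exists s : seq A, forall h, sigma h g \in s.

(* Write the extension of G by A defined by sigma as the pairs (a, g) with
   (a, g)(b, h) = (a.h + b + sigma(g, h), gh).  Coordinates lambda_l : A -> Z whose
   common kernel is the torsion of A, averaged over the finite image of G, give an
   invariant norm on A with finite balls, so that "weakly bounded" becomes "bounded
   in norm".  If sigma is right weakly bounded, right multiplication by the lift of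
   a generator moves the A-part by a bounded amount C; hence, for y in the extension,
   lambda_l(w1 y w2) - C (|w1| + |w2|) has a finite supremum over the words w1, w2
   with w1 y w2 in A and w2 in a prescribed class of the finite image.  These suprema
   at y = (0, g), recombined over the coordinates and the classes, give chi : G -> A
   and an integer M > 0 such that M sigma - delta chi is bounded along generators on
   either side.  As A / M A is finite, chi = - M phi up to a finitely valued error,
   and sigma + delta phi is bounded on both sides.  The left weakly bounded case
   reduces to the right one through the cohomologous cocycle
   (g, h) |-> - sigma(h^-1, g^-1).(gh). *)

From HB Require Import structures.
From Stdlib Require Import ClassicalEpsilon Classical.
From mathcomp Require Import all_boot all_order all_algebra zify ring.
Set Implicit Arguments. Unset Strict Implicit. Unset Printing Implicit Defensive.
Import GRing.Theory Num.Theory Order.TTheory.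
Local Open Scope ring_scope.

(* The trivial extension [int ⋉ A] is a commutative ring containing [A]
   additively, so Z-module identities in [A] can be proved there by [ring]. *)
Definition zext (A : zmodType) := (int * A)%type.
HB.instance Definition _ (A : zmodType) := GRing.Zmodule.on (zext A).

Section TrivialExtension.
Variable A : zmodType.

Definition zext_mul (x y : zext A) : zext A := (x.1 * y.1, y.2 *~ x.1 + x.2 *~ y.1).

Lemma zext_mulA : associative zext_mul.
Proof.
move=> [a x] [b y] [c z]; rewrite /zext_mul /=; congr (_, _); first by rewrite mulrA.
by rewrite !mulrzDl -!mulrzA addrA; congr (_ + _ + _); rewrite mulrC.
Qed.

Lemma zext_mulC : commutative zext_mul.
Proof. by move=> [a x] [b y]; rewrite /zext_mul /= mulrC addrC. Qed.

Lemma zext_mul1 : left_id (1, 0) zext_mul.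
Proof. by move=> [a x]; rewrite /zext_mul /= mul1r mul0rz mulr1z addr0. Qed.

Lemma zext_mulDl : left_distributive zext_mul +%R.
Proof.
move=> [a x] [b y] [c z]; rewrite /zext_mul /=; congr (_, _); first by rewrite mulrDl.
by rewrite mulrzDr mulrzDl addrACA.
Qed.

Lemma zext_one_neq0 : (1, 0) != 0 :> zext A.
Proof. by apply/eqP; case. Qed.

HB.instance Definition _ := GRing.Zmodule_isComNzRing.Build (zext A)
  zext_mulA zext_mulC zext_mul1 zext_mulDl zext_one_neq0.

Definition zext_in (a : A) : zext A := (0, a).

Lemma zext_in_inj : injective zext_in. Proof. by move=> a b []. Qed.
Lemma zext_inD a b : zext_in (a + b) = zext_in a + zext_in b. Proof. by []. Qed.
Lemma zext_inN a : zext_in (- a) = - zext_in a.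
Proof. by rewrite /zext_in; congr (_, _); rewrite oppr0. Qed.

End TrivialExtension.

Ltac zmod_ring :=
  apply: zext_in_inj; rewrite ?(zext_inD, zext_inN); ring.

Definition pbool (P : Prop) : bool := is_left (excluded_middle_informative P).

Lemma pboolP (P : Prop) : reflect P (pbool P).
Proof. by rewrite /pbool; case: excluded_middle_informative => h; constructor. Qed.

Section GroupLaw.
Variables (G : Type) (L : group_law G).
Local Notation "x * y" := (gmul L x y).
Local Notation "x ^-1" := (ginv L x).
Local Notation "1" := (gone L).

Lemma gmulI x : injective (gmul L x).
Proof. by move=> y z e; rewrite -(gmul1 L y) -(gmulV L x) -gmulA e gmulA gmulV gmul1. Qed.

Lemma gmulVr x : x * x^-1 = 1.
Proof.
have idem : (x * x^-1) * (x * x^-1) = x * x^-1.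
  by rewrite -gmulA (gmulA L x^-1) gmulV gmul1.
by rewrite -(gmulV L (x * x^-1)) -{3}idem gmulA gmulV gmul1.
Qed.

Lemma gmul1r x : x * 1 = x.
Proof. by rewrite -(gmulV L x) gmulA gmulVr gmul1. Qed.

Lemma ginvK x : (x^-1)^-1 = x.
Proof. by apply: (@gmulI x^-1); rewrite gmulVr gmulV. Qed.

Lemma ginvM x y : (x * y)^-1 = y^-1 * x^-1.
Proof.
by apply: (@gmulI (x * y)); rewrite gmulVr -gmulA (gmulA L y) gmulVr gmul1 gmulVr.
Qed.

Lemma gmulKV x y : x^-1 * (x * y) = y.
Proof. by rewrite gmulA gmulV gmul1. Qed.

Lemma gmulrK x y : (y * x) * x^-1 = y.
Proof. by rewrite -gmulA gmulVr gmul1r. Qed.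

Lemma gmulrVK x y : (y * x^-1) * x = y.
Proof. by rewrite -gmulA gmulV gmul1r. Qed.

End GroupLaw.

Section Words.
Variables (G : Type) (L : group_law G) (I : Type) (gen : I -> G).

Definition wprod (w : seq I) : G := foldr (fun i x => gmul L (gen i) x) (gone L) w.

Lemma wprod_cat w1 w2 : wprod (w1 ++ w2) = gmul L (wprod w1) (wprod w2).
Proof. by elim: w1 => [|i w IH] /=; rewrite ?gmul1 // IH gmulA. Qed.

Lemma wprod_rcons w i : wprod (rcons w i) = gmul L (wprod w) (gen i).
Proof. by rewrite -cats1 wprod_cat /= gmul1r. Qed.

Lemma wprod_rev (iv : I -> I) : (forall i, gen (iv i) = ginv L (gen i)) ->
  forall w, wprod (rev (map iv w)) = ginv L (wprod w).
Proof.
move=> genV; elim=> [|i w IH] /=; first by rewrite -{1}(gmulV L (gone L)) gmul1r.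
by rewrite rev_cons wprod_rcons IH genV ginvM.
Qed.

End Words.

Lemma List_In_nth (T : Type) (d : T) (s : seq T) x :
  List.In x s -> exists2 i, (i < size s)%N & nth d s i = x.
Proof.
elim: s => [|y s IH] //= [->|/IH [i lti <-]]; first by exists 0%N.
by exists i.+1.
Qed.

Lemma fin_gen_group_words (G : Type) (L : group_law G) : fin_gen_group L ->
  exists (I : finType) (gen : I -> G) (iv : I -> I),
    (forall i, gen (iv i) = ginv L (gen i)) /\ forall g, exists w, wprod L gen w = g.
Proof.
case=> S genS.
pose gen (i : 'I_(size S) * bool) :=
  let x := nth (gone L) S i.1 in if i.2 then ginv L x else x.
pose iv (i : 'I_(size S) * bool) := (i.1, ~~ i.2).
have genV i : gen (iv i) = ginv L (gen i) by case: i => i [] /=; rewrite ?ginvK.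
exists ('I_(size S) * bool)%type, gen, iv; split => // g.
elim: (genS g) => {g} [x Sx | | x _ [w <-] | x y _ [w1 <-] _ [w2 <-]].
- have [i lti <-] := List_In_nth (gone L) Sx.
  by exists [:: (Ordinal lti, false)]; rewrite /= gmul1r.
- by exists [::].
- by exists (rev (map iv w)); rewrite (wprod_rev genV).
- by exists (w1 ++ w2); rewrite wprod_cat.
Qed.

Lemma finite_image_classes (G : Type) (A : zmodType) (act : A -> G -> A) :
  finite_image act ->
  exists (Q : finType) (cls : G -> Q) (rep : Q -> G),
    cancel rep cls /\ forall x y, cls x = cls y <-> act^~ x =1 act^~ y.
Proof.
case=> fs fsP.
pose f (i : 'I_(size fs)) := nth id fs i.
(* [c x] is the first index of [act^~ x] in [fs], so it only depends on that map. *)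
pose c x := [pick i | pbool (f i =1 act^~ x)].
have cSome x : exists2 i, f i =1 act^~ x & c x = Some i.
  rewrite /c; case: pickP => [i /pboolP fiE | none]; first by exists i.
  have [fx fs_fx fxE] := fsP x; have [i lti fiE] := List_In_nth id fs_fx.
  by case/negbT/pboolP: (none (Ordinal lti)) => a; rewrite /f fiE fxE.
have cP x y : c x = c y <-> act^~ x =1 act^~ y.
  split=> [cxy a | exy].
    have [i fiE cx] := cSome x; have [j fjE cy] := cSome y.
    by move: cxy; rewrite cx cy => -[ij]; rewrite -fiE -fjE ij.
  by apply: eq_pick => i; apply/pboolP/pboolP => fiE a; rewrite fiE exy.
pose Q := {o | pbool (exists x, c x = o)}.
pose cls x : Q := exist _ (c x) (introT (pboolP _) (ex_intro _ x erefl)).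
have [rep repE] : exists rep : Q -> G, forall o, c (rep o) = val o.
  by apply: (choice (fun (o : Q) x => c x = val o)) => o; apply/pboolP; exact: valP o.
exists Q, cls, rep; split; first by move=> o; apply: val_inj; rewrite /= repE.
by move=> x y; rewrite -cP; split=> [/(congr1 val) | cxy] //; exact: val_inj.
Qed.

Section FinGenZmod.
Variables (A : zmodType) (gens : seq A).
Local Notation sz := (size gens).

Definition zcomb (I : {set 'I_sz}) (c : 'I_sz -> int) : A := \sum_(i in I) gens`_i *~ c i.

Definition zindep (I : {set 'I_sz}) :=
  forall c, zcomb I c = 0 -> forall i, i \in I -> c i = 0.

Definition zspan (I : {set 'I_sz}) (x : A) := exists c, x = zcomb I c.

Lemma zcombB I c c' : zcomb I c - zcomb I c' = zcomb I (fun i => c i - c' i).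
Proof. by rewrite -sumrB; apply: eq_bigr => i _; rewrite mulrzBr. Qed.

Lemma zspanB I x y : zspan I x -> zspan I y -> zspan I (x - y).
Proof. by move=> [c ->] [c' ->]; exists (fun i => c i - c' i); rewrite zcombB. Qed.

Lemma zspanMz I x z : zspan I x -> zspan I (x *~ z).
Proof.
move=> [c ->]; exists (fun i => c i * z).
by rewrite /zcomb mulrz_suml; apply: eq_bigr => i _; rewrite mulrzA.
Qed.

Lemma zspanD I x y : zspan I x -> zspan I y -> zspan I (x + y).
Proof.
move=> xs ys; rewrite -[y]opprK; apply: zspanB xs _.
by rewrite -mulrN1z; apply: zspanMz.
Qed.

Lemma zindep_coef_eq I c c' :
  zindep I -> zcomb I c = zcomb I c' -> forall i, i \in I -> c i = c' i.
Proof.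
move=> indI e i Ii; apply/eqP; rewrite -subr_eq0; apply/eqP.
by apply: (indI (fun k => c k - c' k)) Ii; rewrite -zcombB e subrr.
Qed.

Lemma exists_max_zindep :
  exists2 I, zindep I & forall J, zindep J -> (#|J| <= #|I|)%N.
Proof.
pose P k := pbool (exists2 I, zindep I & #|I| = k).
have P0 : exists k, P k.
  by exists 0%N; apply/pboolP; exists set0; rewrite ?cards0 // => c _ i; rewrite inE.
have Pub k : P k -> (k <= sz)%N.
  by move=> /pboolP[I _ <-]; apply: leq_trans (max_card _) _; rewrite card_ord.
have [k /pboolP[I indI <-] maxk] := ex_maxnP P0 Pub.
by exists I => // J indJ; apply: maxk; apply/pboolP; exists J.
Qed.

Section MaximalIndependent.
Variable I : {set 'I_sz}.
Hypotheses (indI : zindep I) (maxI : forall J, zindep J -> (#|J| <= #|I|)%N).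

Lemma zspan_gen_multiple (j : 'I_sz) : exists d : int, d != 0 /\ zspan I (gens`_j *~ d).
Proof.
have [Ij | I'j] := boolP (j \in I).
  exists 1; split => //; exists (fun i => (i == j)%:Z).
  rewrite /zcomb (bigD1 j) //= eqxx big1 ?addr0 // => i /andP[_ /negbTE->].
  by rewrite mulr0z.
have notind : ~ zindep (j |: I) by move/maxI; rewrite cardsU1 I'j ltnn.
have [c notc] := not_all_ex_not _ _ notind.
have [cE noti] := imply_to_and _ _ notc.
have [i nci] := not_all_ex_not _ _ noti.
have [jIi ci] := imply_to_and _ _ nci.
rewrite /zcomb big_setU1 //= in cE.
have cj : c j != 0.
  apply: contra_notN ci => /eqP cj0; rewrite cj0 mulr0z add0r in cE.
  by case/setU1P: jIi => [-> // | Ii]; apply: indI cE _ Ii.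
exists (- c j); split; rewrite ?oppr_eq0 //; exists c.
by apply/eqP; rewrite mulrNz eqr_oppLR -addr_eq0 cE.
Qed.

Hypothesis gensP : forall x, exists k : nat -> int, x = \sum_(i < sz) gens`_i *~ k i.

Lemma zspan_multiple : exists2 N, (0 < N)%N & forall x, zspan I (x *+ N).
Proof.
have [d dP] := choice _ zspan_gen_multiple.
have dspan (i : 'I_sz) : zspan I (gens`_i *~ `|d i|).
  have [_ ds] := dP i; case: (lerP 0 (d i)) => [d0|d0]; first by rewrite ger0_norm.
  by rewrite ltr0_norm // mulrNz -mulrN1z; apply: zspanMz.
exists (\prod_(j < sz) `|d j|)%N => [|x].
  by apply: prodn_gt0 => j; rewrite absz_gt0; case: (dP j).
have [k ->] := gensP x; rewrite -sumrMnl.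
apply: (big_ind (zspan I)) => [|y z|i _].
- by exists (fun=> 0); rewrite /zcomb big1 // => i _; rewrite mulr0z.
- exact: zspanD.
rewrite (bigD1 i) //= mulrnA !pmulrn -!mulrzA mulrCA mulrzA abszE.
exact: zspanMz.
Qed.

End MaximalIndependent.

End FinGenZmod.

Lemma fin_gen_zmod_coords (A : zmodType) : fin_gen_zmod A ->
  exists n (lam : 'I_n -> {additive A -> int}) (e : 'I_n -> A) (N : nat),
    (0 < N)%N /\ forall x, \sum_(l < n) e l *~ lam l x = x *+ N.
Proof.
case=> gens gensP.
have [I indI maxI] := exists_max_zindep gens.
have [N N0 spanN] := zspan_multiple indI maxI gensP.
have [coef coefE] := choice _ spanN.
pose lam l x : int := if l \in I then coef x l else 0.
have lamB l : {morph lam l : x y / x - y}.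
  move=> x y; rewrite /lam; case: ifP => Il; last by rewrite subr0.
  apply: (zindep_coef_eq (c' := fun i => coef x i - coef y i)) indI _ l Il.
  by rewrite -coefE -zcombB -!coefE mulrnBl.
exists (size gens), (fun l => HB.pack_for {additive A -> int} (lam l)
                       (GRing.isZmodMorphism.Build A int (lam l) (lamB l))).
exists (fun l => gens`_l), N; split=> // x.
rewrite coefE /zcomb [RHS]big_mkcond; apply: eq_bigr => l _ /=.
by rewrite /lam; case: ifP; rewrite ?mulr0z.
Qed.

Lemma fin_gen_zmod_mod_reps (A : zmodType) : fin_gen_zmod A ->
  forall M, (0 < M)%N -> exists R : seq A, forall x, exists r c, r \in R /\ x = r + c *+ M.
Proof.
case=> gens gensP M M0; set sz := size gens.
exists [seq \sum_(i < sz) gens`_i *~ (f i : nat)%:Z | f : {ffun 'I_sz -> 'I_M}] => x.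
have [k ->] := gensP x.
have M0z : M%:Z != 0 by rewrite eqz_nat -lt0n.
have ltkM i : (absz (k i %% M)%Z < M)%N.
  by have := ltz_mod (k i) M0z; have := modz_ge0 (k i) M0z; lia.
exists (\sum_(i < sz) gens`_i *~ (Ordinal (ltkM i) : nat)%:Z).
exists (\sum_(i < sz) gens`_i *~ (k i %/ M)%Z); split.
  apply/imageP; exists [ffun i : 'I_sz => Ordinal (ltkM i)] => //.
  by apply: eq_bigr => i _; rewrite ffunE.
rewrite -sumrMnl -big_split /=; apply: eq_bigr => i _.
rewrite pmulrn -mulrzA -mulrzDr; congr (_ *~ _).
by have := divz_eq (k i) M; have := modz_ge0 (k i) M0z; lia.
Qed.

Lemma le_sum_mem (T : eqType) (s : seq T) (F : T -> int) x :
  (forall y, 0 <= F y) -> x \in s -> F x <= \sum_(y <- s) F y.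
Proof.
move=> F0; elim: s => [|y s IH] //; rewrite in_cons big_cons => /orP[/eqP-> | sx].
  by rewrite lerDl sumr_ge0.
by apply: le_trans (IH sx) _; rewrite lerDr.
Qed.


Lemma bounded_int_max (P : int -> Prop) :
  (exists x, P x) -> (exists B, forall x, P x -> x <= B) ->
  exists2 M, P M & forall x, P x -> x <= M.
Proof.
move=> [x0 Px0] [B PB].
pose Pn k := pbool (P (x0 + k%:Z)).
have Pn0 : exists k, Pn k by exists 0%N; apply/pboolP; rewrite addr0.
have Pn_ub k : Pn k -> (k <= absz (B - x0))%N by move=> /pboolP/PB; lia.
have [k /pboolP Pk kmax] := ex_maxnP Pn0 Pn_ub.
exists (x0 + k%:Z) => // x Px; have [ltx | lex] := ltrP x x0; first lia.
have : (absz (x - x0) <= k)%N.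
  by apply: kmax; apply/pboolP; have -> : x0 + (absz (x - x0))%:Z = x by lia.
lia.
Qed.
Lemma coords_bounded_finite (A : zmodType) n (lam : 'I_n -> {additive A -> int})
    (e : 'I_n -> A) N :
  (0 < N)%N -> (forall x, \sum_(l < n) e l *~ lam l x = x *+ N) ->
  (exists R : seq A, forall x, exists r c, r \in R /\ x = r + c *+ N) ->
  forall B : int, exists s : seq A, forall x, (forall l, `|lam l x| <= B) -> x \in s.
Proof.
move=> N0 lamE [R RP] B.
pose K := absz (B + \sum_(r <- R) \sum_(l < n) `|lam l r|).
exists [seq r + \sum_(l < n) e l *~ ((f l : nat)%:Z - K%:Z)
       | r <- R, f : {ffun 'I_n -> 'I_(2 * K).+1} <- enum {ffun 'I_n -> 'I_(2 * K).+1}].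
move=> x xB.
have [r [u [Rr xE]]] := RP x; rewrite xE in xB *.
have uK l : `|lam l u| <= K%:Z.
  have rK : `|lam l r| <= \sum_(r <- R) \sum_(l < n) `|lam l r|.
    apply: le_trans (le_sum_mem _ Rr) => [|y]; last exact: sumr_ge0.
    by rewrite (bigD1 l) //= lerDl sumr_ge0.
  move: (xB l) rK; rewrite raddfD raddfMn /K -mulr_natr.
  by move: (lam l u) (lam l r) => p q; nia.
have ltK l : (absz (lam l u + K%:Z)%R < (2 * K).+1)%N by have := uK l; lia.
pose f := [ffun l => Ordinal (ltK l)].
have -> : u *+ N = \sum_(l < n) e l *~ ((f l : nat)%:Z - K%:Z).
  rewrite -lamE; apply: eq_bigr => l _; rewrite ffunE /=; congr (_ *~ _).
  by have := uK l; lia.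
by apply/allpairsP; exists (r, f); rewrite mem_enum.
Qed.

Section Cocycles.
Variables (G : Type) (L : group_law G) (A : zmodType) (act : A -> G -> A).
Hypotheses (act1 : forall a, act a (gone L) = a)
  (actM : forall a g h, act (act a g) h = act a (gmul L g h))
  (actD : forall a b g, act (a + b) g = act a g + act b g).

Local Notation "x ** y" := (gmul L x y) (at level 40, left associativity).
Local Notation one := (gone L).
Local Notation inv := (ginv L).

Lemma act0 g : act 0 g = 0.
Proof. by apply: (@addrI _ (act 0 g)); rewrite -actD !addr0. Qed.

Lemma actN a g : act (- a) g = - act a g.
Proof. by apply/eqP; rewrite -addr_eq0 -actD addNr act0. Qed.

Lemma actMn a k g : act (a *+ k) g = act a g *+ k.
Proof. by elim: k => [|k IH]; rewrite ?mulr0n ?act0 // !mulrS actD IH. Qed.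

Lemma actMz a z g : act (a *~ z) g = act a g *~ z.
Proof. by case: z => k; rewrite ?NegzE ?mulrNz ?actN -!pmulrn actMn. Qed.

Lemma act_sum (I : Type) (r : seq I) (P : pred I) (F : I -> A) g :
  act (\sum_(i <- r | P i) F i) g = \sum_(i <- r | P i) act (F i) g.
Proof. by elim/big_rec2: _ => [|i b c _ <-]; rewrite ?act0 ?actD. Qed.

Lemma actK g a : act (act a g) (inv g) = a.
Proof. by rewrite actM gmulVr act1. Qed.

Lemma actVK g a : act (act a (inv g)) g = a.
Proof. by rewrite actM gmulV act1. Qed.

Lemma cocycle_x1 tau : cocycle2 L act tau -> forall x, tau x one = tau one one.
Proof.
move=> ctau x; have := ctau x one one; rewrite gmul1 act1 gmul1r => e.
by apply: (@addrI _ (tau x one)); rewrite {3}e; zmod_ring.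
Qed.

Lemma cocycle_1x tau : cocycle2 L act tau -> forall h, tau one h = act (tau one one) h.
Proof. by move=> ctau h; have := ctau one one h; rewrite !gmul1 addrK. Qed.

Definition coboundary (phi : G -> A) g h := act (phi g) h + phi h - phi (g ** h).

Definition cob (tau : G -> G -> A) (phi : G -> A) g h := tau g h + coboundary phi g h.

Lemma cob_cocycle tau phi : cocycle2 L act tau -> cocycle2 L act (cob tau phi).
Proof.
by move=> ctau g h1 h2; rewrite /cob /coboundary ctau !actD !actN !actM gmulA; zmod_ring.
Qed.

Lemma cohomologous_cob tau phi : cohomologous L act tau (cob tau phi).
Proof. by exists phi => g h; rewrite /cob /coboundary; zmod_ring. Qed.

Lemma cohomologous_trans tau1 tau2 tau3 :
  cohomologous L act tau1 tau2 -> cohomologous L act tau2 tau3 -> cohomologous L act tau1 tau3.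
Proof.
move=> [f1 e1] [f2 e2]; exists (fun g => f1 g + f2 g) => g h.
by rewrite actD -[tau3 g h](subrK (tau2 g h)) -addrA e1 e2; zmod_ring.
Qed.

Section InvariantNorm.
Variables (Q : finType) (cls : G -> Q) (rep : Q -> G).
Hypotheses (repK : cancel rep cls) (clsP : forall x y, cls x = cls y <-> act^~ x =1 act^~ y).

Lemma act_rep_cls a g : act a (rep (cls g)) = act a g.
Proof. by move: a; apply/clsP; rewrite repK. Qed.

Definition cls_lmul k j := cls (k ** rep j).

Lemma cls_lmulK k : cancel (cls_lmul k) (cls_lmul (inv k)).
Proof.
move=> j; rewrite -[RHS]repK; apply/clsP => a.
by rewrite -actM act_rep_cls actM gmulKV.
Qed.

Lemma act_rep_cls_lmul a k j : act a (rep (cls_lmul k j)) = act (act a k) (rep j).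
Proof. by rewrite act_rep_cls actM. Qed.


Lemma act_inv_rep_cls a x : act a (inv (rep (cls x))) = act a (inv x).
Proof. by rewrite -{1}(actVK x a) -(act_rep_cls (act a (inv x)) x) actK. Qed.

Lemma reindex_cls_lmul (V : nmodType) (F : Q -> V) k :
  \sum_j F j = \sum_j F (cls_lmul k j).
Proof. exact: reindex_inj (can_inj (cls_lmulK k)). Qed.

Lemma act_rep_cls1 a : act a (rep (cls one)) = a.
Proof. by rewrite act_rep_cls act1. Qed.

Variables (n : nat) (lam : 'I_n -> {additive A -> int}).

Definition nrm (a : A) : int := \sum_j \sum_(l < n) `|lam l (act a (rep j))|.

Lemma nrm_ge0 a : 0 <= nrm a.
Proof. by do 2![apply: sumr_ge0 => ? _]. Qed.

Lemma nrm0 : nrm 0 = 0.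
Proof. by rewrite /nrm big1 // => j _; rewrite big1 // => l _; rewrite act0 raddf0. Qed.

Lemma nrmD a b : nrm (a + b) <= nrm a + nrm b.
Proof.
rewrite /nrm -big_split ler_sum // => j _; rewrite -big_split ler_sum // => l _.
by rewrite actD raddfD ler_normD.
Qed.

Lemma nrmN a : nrm (- a) = nrm a.
Proof. by apply: eq_bigr => j _; apply: eq_bigr => l _; rewrite actN raddfN normrN. Qed.

Lemma nrmB a b : nrm (a - b) <= nrm a + nrm b.
Proof. by rewrite -(nrmN b) nrmD. Qed.

Lemma nrmMz a z : nrm (a *~ z) = nrm a * `|z|.
Proof.
rewrite /nrm mulr_suml; apply: eq_bigr => j _; rewrite mulr_suml; apply: eq_bigr => l _.
by rewrite actMz raddfMz mulrzz normrM.
Qed.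

Lemma nrmMn a k : nrm (a *+ k) = nrm a * k%:Z.
Proof. by rewrite pmulrn nrmMz. Qed.

Lemma nrm_sum (I : Type) (r : seq I) (P : pred I) (F : I -> A) :
  nrm (\sum_(i <- r | P i) F i) <= \sum_(i <- r | P i) nrm (F i).
Proof.
elim/big_rec2: _ => [|i b c _ le_bc]; first by rewrite nrm0.
by apply: le_trans (nrmD _ _) _; rewrite lerD2l.
Qed.

Lemma nrm_act a k : nrm (act a k) = nrm a.
Proof.
rewrite /nrm [RHS](reindex_cls_lmul _ k).
by apply: eq_bigr => j _; apply: eq_bigr => l _; rewrite act_rep_cls_lmul.
Qed.

Lemma lam_act_le_nrm l j a : `|lam l (act a (rep j))| <= nrm a.
Proof.
rewrite /nrm (bigD1 j) //= (bigD1 l) //= -addrA lerDl.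
by rewrite addr_ge0 ?sumr_ge0 // => ? _; rewrite sumr_ge0.
Qed.

Lemma lam_le_nrm l a : `|lam l a| <= nrm a.
Proof. by rewrite -{1}(act_rep_cls1 a) lam_act_le_nrm. Qed.

Lemma nrm_seq_bounded (s : seq A) : exists B, forall x, x \in s -> nrm x <= B.
Proof. by exists (\sum_(y <- s) nrm y) => x; apply: le_sum_mem nrm_ge0. Qed.

Variables (e : 'I_n -> A) (N : nat).
Hypotheses (N_gt0 : (0 < N)%N) (lamE : forall x, \sum_(l < n) e l *~ lam l x = x *+ N)
  (mod_reps : forall M, (0 < M)%N ->
     exists R : seq A, forall x, exists r c, r \in R /\ x = r + c *+ M).

Lemma nrm_ball_finite (B : int) : exists s : seq A, forall x, nrm x <= B -> x \in s.
Proof.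
have [s sP] := coords_bounded_finite N_gt0 lamE (mod_reps N_gt0) B.
by exists s => x xB; apply: sP => l; apply: le_trans (lam_le_nrm l x) xB.
Qed.

Lemma sum_lam_act_rep a :
  \sum_(l < n) \sum_j act (e l) (inv (rep j)) *~ lam l (act a (rep j)) = a *+ (#|Q| * N).
Proof.
rewrite exchange_big /= (eq_bigr (fun=> a *+ N)) => [|j _].
  by rewrite sumr_const mulnC mulrnA.
rewrite (eq_bigr (fun l => act (e l *~ lam l (act a (rep j))) (inv (rep j)))) => [|l _].
  by rewrite -act_sum lamE actMn actK.
by rewrite actMz.
Qed.

Definition rbounded (tau : G -> G -> A) := forall h, exists B, forall g, nrm (tau g h) <= B.
Definition lbounded (tau : G -> G -> A) := forall g, exists B, forall h, nrm (tau g h) <= B.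

Lemma rboundedP tau : rbounded tau <-> right_weakly_bounded tau.
Proof.
split=> [tauB h | tauB h].
  by have [B BP] := tauB h; have [s sP] := nrm_ball_finite B; exists s => g; apply/sP/BP.
by have [s sP] := tauB h; have [B BP] := nrm_seq_bounded s; exists B => g; apply/BP/sP.
Qed.

Lemma lboundedP tau : lbounded tau <-> left_weakly_bounded tau.
Proof.
split=> [tauB g | tauB g].
  by have [B BP] := tauB g; have [s sP] := nrm_ball_finite B; exists s => h; apply/sP/BP.
by have [s sP] := tauB g; have [B BP] := nrm_seq_bounded s; exists B => h; apply/BP/sP.
Qed.

(* Write [- chi g = r g + phi g *+ M] with [r g] in a finite set of representatives
   of [A / M A]. *)
Lemma cob_mulrn_bound tau (chi : G -> A) M : (0 < M)%N ->
  exists phi C, forall g h,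
    nrm (cob tau phi g h) <= nrm (tau g h *+ M - coboundary chi g h) + C.
Proof.
move=> M_gt0; have [R RP] := mod_reps M_gt0; have [Rb RbP] := nrm_seq_bounded R.
have [qr qrP] : exists qr : G -> A * A,
    forall g, (qr g).1 \in R /\ - chi g = (qr g).1 + (qr g).2 *+ M.
  apply: (choice (fun g (qr : A * A) => qr.1 \in R /\ - chi g = qr.1 + qr.2 *+ M)) => g.
  by have [r [c rc]] := RP (- chi g); exists (r, c).
exists (fun g => (qr g).2), (Rb + Rb + Rb) => g h.
have phiM x : (qr x).2 *+ M = - chi x - (qr x).1 by rewrite (qrP x).2; zmod_ring.
have cobM : cob tau (fun g => (qr g).2) g h *+ M =
    (tau g h *+ M - coboundary chi g h) - coboundary (fun g => (qr g).1) g h.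
  by rewrite /cob /coboundary !mulrnDl mulNrn -actMn !phiM !actD !actN; zmod_ring.
apply: le_trans (_ : _ <= nrm (cob tau (fun g => (qr g).2) g h *+ M)) _.
  by rewrite nrmMn ler_peMr ?nrm_ge0 // lez_nat.
rewrite cobM; apply: le_trans (nrmB _ _) _; rewrite lerD2l.
apply: le_trans (nrmB _ _) _; rewrite lerD ?RbP ?(qrP _).1 //.
by apply: le_trans (nrmD _ _) _; rewrite nrm_act lerD ?RbP ?(qrP _).1.
Qed.

Lemma cob_dual tau : cocycle2 L act tau -> forall g h,
  cob tau (fun x => - tau (inv x) x - tau one one) g h = - act (tau (inv h) (inv g)) (g ** h).
Proof.
move=> ctau g h.
have e1 := ctau (inv h ** inv g) g h; rewrite gmulrVK in e1.
have e2 := ctau (inv h) (inv g) g; rewrite gmulV (cocycle_x1 ctau) in e2.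
have e3 : tau (inv h ** inv g) g = tau one one - act (tau (inv h) (inv g)) g + tau (inv g) g.
  by rewrite e2; zmod_ring.
by rewrite /cob /coboundary ginvM e1 e3 !actD !actN !actM; zmod_ring.
Qed.

Lemma lbounded_dual tau : cocycle2 L act tau -> lbounded tau ->
  rbounded (cob tau (fun x => - tau (inv x) x - tau one one)).
Proof.
move=> ctau tauB h; have [B BP] := tauB (inv h).
by exists B => g; rewrite cob_dual // nrmN nrm_act.
Qed.

Section Generators.
Variables (I : finType) (gen : I -> G).
Hypothesis gen_all : forall g, exists w, wprod L gen w = g.
Local Notation wp := (wprod L gen).

Lemma rbounded_gen tau : cocycle2 L act tau ->
  (forall i, exists B, forall g, nrm (tau g (gen i)) <= B) -> rbounded tau.
Proof.
move=> ctau genB h; have [w <-] := gen_all h; elim: w => [|i w [B BP]].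
  by exists (nrm (tau one one)) => g; rewrite /= cocycle_x1.
have [Bi BiP] := genB i; exists (Bi + B + B) => g.
rewrite /= ctau; apply: le_trans (nrmB _ _) _; rewrite lerD //.
by apply: le_trans (nrmD _ _) _; rewrite nrm_act lerD.
Qed.

Lemma lbounded_gen tau : cocycle2 L act tau ->
  (forall i, exists B, forall h, nrm (tau (gen i) h) <= B) -> lbounded tau.
Proof.
move=> ctau genB g; have [w <-] := gen_all g; elim: w => [|i w [B BP]].
  by exists (nrm (tau one one)) => h; rewrite /= cocycle_1x // nrm_act.
have [Bi BiP] := genB i; exists (Bi + nrm (tau (gen i) (wp w)) + B) => h.
have -> : tau (wp (i :: w)) h =
    tau (gen i) (wp w ** h) - act (tau (gen i) (wp w)) h + tau (wp w) h.
  by rewrite /= (ctau (gen i) (wp w) h); zmod_ring.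
apply: le_trans (nrmD _ _) _; rewrite lerD //.
by apply: le_trans (nrmB _ _) _; rewrite nrm_act lerD.
Qed.

Lemma rbounded_gen_uniform tau : rbounded tau ->
  exists Lb, forall i x, nrm (tau x (gen i)) <= Lb.
Proof.
move=> tauB; have [B BP] := choice _ (fun i => tauB (gen i)).
exists (\sum_i `|B i|) => i x; apply: le_trans (BP i x) _; apply: le_trans (ler_norm _) _.
by rewrite (bigD1 i) //= lerDl sumr_ge0.
Qed.

Section Construction.
Variable iv : I -> I.
Hypothesis genV : forall i, gen (iv i) = inv (gen i).
Variable sigma : G -> G -> A.
Hypotheses (csigma : cocycle2 L act sigma) (rsigma : rbounded sigma).
Variable Lb : int.
Hypothesis sigma_gen_le : forall i x, nrm (sigma x (gen i)) <= Lb.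

Definition ext_mul (x y : A * G) : A * G := (act x.1 y.2 + y.1 + sigma x.2 y.2, x.2 ** y.2).

Lemma ext_mulA : associative ext_mul.
Proof.
move=> [a g] [b h] [c k]; rewrite /ext_mul /=; congr pair; last exact: gmulA.
by rewrite !actD actM (csigma g h k); zmod_ring.
Qed.

Definition rmul_word x w := foldl (fun x i => ext_mul x (0, gen i)) x w.

Lemma rmul_word_rcons x w i : rmul_word x (rcons w i) = ext_mul (rmul_word x w) (0, gen i).
Proof. by rewrite /rmul_word foldl_rcons. Qed.

Lemma rmul_word_shift a c g w :
  rmul_word (a + c, g) w = ((rmul_word (a, g) w).1 + act c (wp w), (rmul_word (a, g) w).2).
Proof.
elim: w a c g => [|i w IH] a c g /=; first by rewrite act1.
have -> : ext_mul (a + c, g) (0, gen i) =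
    ((ext_mul (a, g) (0, gen i)).1 + act c (gen i), g ** gen i).
  by rewrite /ext_mul /= actD; congr pair; zmod_ring.
by rewrite IH actM.
Qed.

Lemma rmul_word_nrm x w : nrm (rmul_word x w).1 <= nrm x.1 + Lb * (size w)%:Z.
Proof.
elim: w x => [|i w IH] x /=; first by rewrite mulr0 addr0.
have step : nrm (ext_mul x (0, gen i)).1 <= nrm x.1 + Lb.
  by rewrite /= addr0; apply: le_trans (nrmD _ _) _; rewrite nrm_act lerD2l.
apply: le_trans (IH _) _.
by rewrite -addn1 PoszD mulrDr mulr1 addrC addrCA lerD2l.
Qed.

(* [rmul_word (0, one) w] lifts [wp w] to the extension, and [word_val y w1 w2] is the
   [A]-part of [lift w1 * y * lift w2], which lies in [A] when [admissible j y w1 w2]. *)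
Definition word_val y w1 w2 := (rmul_word (ext_mul (rmul_word (0, one) w1) y) w2).1.

Lemma word_val_shift b c g w1 w2 :
  word_val (b + c, g) w1 w2 = word_val (b, g) w1 w2 + act c (wp w2).
Proof.
rewrite /word_val; set x := rmul_word _ w1.
have -> : ext_mul x (b + c, g) = ((ext_mul x (b, g)).1 + c, (ext_mul x (b, g)).2).
  by rewrite /ext_mul /=; congr pair; zmod_ring.
by rewrite rmul_word_shift.
Qed.

Definition admissible j (y : A * G) w1 w2 := wp w1 ** y.2 ** wp w2 = one /\ cls (wp w2) = j.

Definition score l y w1 w2 := lam l (word_val y w1 w2) - Lb * (size w1 + size w2)%:Z.

Lemma score_le l y w1 w2 B :
  (forall x, nrm (sigma x y.2) <= B) -> score l y w1 w2 <= nrm y.1 + B.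
Proof.
move=> yB; rewrite /score /word_val; set x := rmul_word _ w1.
have x_le : nrm x.1 <= Lb * (size w1)%:Z.
  by have := rmul_word_nrm (0, one) w1; rewrite nrm0 add0r.
have xy_le : nrm (ext_mul x y).1 <= nrm x.1 + nrm y.1 + B.
  apply: le_trans (nrmD _ _) _; rewrite lerD //.
  by apply: le_trans (nrmD _ _) _; rewrite nrm_act.
have := rmul_word_nrm (ext_mul x y) w2.
have := lam_le_nrm l (rmul_word (ext_mul x y) w2).1.
move: x_le xy_le; set v := lam l _; have := ler_norm v; lia.
Qed.

Lemma admissible_exists j y : exists w1 w2, admissible j y w1 w2.
Proof.
have [w2 w2E] := gen_all (rep j); have [w1 w1E] := gen_all (inv (y.2 ** rep j)).
by exists w1, w2; rewrite /admissible w1E w2E repK -gmulA gmulV.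
Qed.

Lemma best_score_exists l j y : exists M,
  (exists w1 w2, admissible j y w1 w2 /\ score l y w1 w2 = M) /\
  forall w1 w2, admissible j y w1 w2 -> score l y w1 w2 <= M.
Proof.
pose P M := exists w1 w2, admissible j y w1 w2 /\ score l y w1 w2 = M.
have [M PM Mmax] : exists2 M, P M & forall x, P x -> x <= M.
  apply: bounded_int_max.
    by have [w1 [w2 adm]] := admissible_exists j y; exists (score l y w1 w2), w1, w2.
  by have [B BP] := rsigma y.2; exists (nrm y.1 + B) => _ [w1 [w2 [_ <-]]]; apply: score_le.
by exists M; split=> // w1 w2 adm; apply: Mmax; exists w1, w2.
Qed.

Definition best_score l j y : int :=
  proj1_sig (constructive_indefinite_description _ (best_score_exists l j y)).

Lemma best_score_attained l j y :
  exists w1 w2, admissible j y w1 w2 /\ score l y w1 w2 = best_score l j y.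
Proof.
exact: (proj2_sig (constructive_indefinite_description _ (best_score_exists l j y))).1.
Qed.

Lemma best_score_ub l j y w1 w2 :
  admissible j y w1 w2 -> score l y w1 w2 <= best_score l j y.
Proof.
exact: (proj2_sig (constructive_indefinite_description _ (best_score_exists l j y))).2.
Qed.

Lemma best_score_lmul l j i y :
  best_score l j (ext_mul (0, gen i) y) <= best_score l j y + Lb.
Proof.
have [w1 [w2 [[w12 cw2] <-]]] := best_score_attained l j (ext_mul (0, gen i) y).
have adm : admissible j y (rcons w1 i) w2.
  by split=> //; rewrite wprod_rcons -(gmulA L (wp w1)).
have := best_score_ub l adm.
by rewrite /score /word_val rmul_word_rcons -ext_mulA size_rcons; lia.
Qed.

Lemma best_score_rmul l j i y :
  best_score l j (ext_mul y (0, gen i)) <= best_score l (cls_lmul (gen i) j) y + Lb.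
Proof.
have [w1 [w2 [[w12 cw2] <-]]] := best_score_attained l j (ext_mul y (0, gen i)).
have adm : admissible (cls_lmul (gen i) j) y w1 (i :: w2).
  split; first by rewrite /= gmulA -(gmulA L (wp w1)).
  move: cw2; rewrite -{1}[j]repK => /clsP same.
  by apply/clsP => a; rewrite /= -!actM same.
have := best_score_ub l adm.
by rewrite /score /word_val /= -ext_mulA; lia.
Qed.

Lemma best_score_shift_le l j b c g :
  best_score l j (b + c, g) <= best_score l j (b, g) + lam l (act c (rep j)).
Proof.
have [w1 [w2 [[w12 cw2] <-]]] := best_score_attained l j (b + c, g).
have := best_score_ub l (conj w12 cw2 : admissible j (b, g) w1 w2).
by rewrite /score word_val_shift (raddfD (lam l)) -cw2 act_rep_cls; lia.
Qed.

Lemma best_score_shift l j b c g :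
  best_score l j (b + c, g) = best_score l j (b, g) + lam l (act c (rep j)).
Proof.
apply/eqP; rewrite eq_le best_score_shift_le /=.
by have := best_score_shift_le l j (b + c) (- c) g; rewrite addrK actN raddfN lerBrDr.
Qed.

Definition potential l j g := best_score l j (0, g).

Lemma best_scoreE l j c g : best_score l j (c, g) = potential l j g + lam l (act c (rep j)).
Proof. by rewrite /potential -best_score_shift add0r. Qed.

Lemma potential_lmul i : exists B, forall l j h,
  `|potential l j (gen i ** h) - potential l j h + lam l (act (sigma (gen i) h) (rep j))| <= B.
Proof.
pose c := sigma (inv (gen i)) (gen i) + sigma one one.
exists (Lb + nrm c) => l j h.
have up := best_score_lmul l j i (0, h).
rewrite /ext_mul /= act0 !add0r !best_scoreE act0 raddf0 addr0 in up.
have down := best_score_lmul l j (iv i) (sigma (gen i) h, gen i ** h).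
have ce : ext_mul (0, gen (iv i)) (sigma (gen i) h, gen i ** h) = (act c h, h).
  rewrite /ext_mul /= act0 add0r genV gmulKV; congr pair.
  by rewrite (csigma (inv (gen i)) (gen i) h) gmulV (cocycle_1x csigma) /c actD; zmod_ring.
rewrite ce !best_scoreE in down.
have := lam_act_le_nrm l j (act c h); rewrite nrm_act.
move: up down; set x := lam l (act (act c h) _); set y := lam l (act (sigma _ h) _).
rewrite ler_norml; lia.
Qed.

Lemma potential_rmul i : exists B, forall l j g,
  `|potential l j (g ** gen i) - potential l (cls_lmul (gen i) j) g| <= B.
Proof.
exists (4 * Lb) => l j g.
have up := best_score_rmul l j i (0, g).
rewrite /ext_mul /= act0 !add0r !best_scoreE act0 raddf0 addr0 in up.
have down := best_score_rmul l (cls_lmul (gen i) j) (iv i) (sigma g (gen i), g ** gen i).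
rewrite genV cls_lmulK /ext_mul /= addr0 gmulrK !best_scoreE in down.
have := lam_act_le_nrm l j (sigma g (gen i)).
have := lam_act_le_nrm l (cls_lmul (gen i) j)
  (act (sigma g (gen i)) (inv (gen i)) + sigma (g ** gen i) (inv (gen i))).
have := nrmD (act (sigma g (gen i)) (inv (gen i))) (sigma (g ** gen i) (inv (gen i))).
have := sigma_gen_le i g; have := sigma_gen_le (iv i) (g ** gen i); rewrite genV nrm_act.
move: up down; set x := lam l (act (act _ _ + _) _); set y := lam l (act (sigma g _) _).
rewrite !ler_norml; lia.
Qed.

Local Notation M := (#|Q| * N)%N.

Definition avg_potential g := \sum_(l < n) \sum_j act (e l) (inv (rep j)) *~ potential l j g.

Lemma avg_potential_lmul i : exists B, forall h,
  nrm (avg_potential (gen i ** h) - avg_potential h + sigma (gen i) h *+ M) <= B.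
Proof.
have [B BP] := potential_lmul i.
exists (\sum_(l < n) \sum_j nrm (act (e l) (inv (rep j))) * B) => h.
rewrite -sum_lam_act_rep /avg_potential -sumrB -big_split /=.
apply: le_trans (nrm_sum _ _ _) _; apply: ler_sum => l _.
rewrite -sumrB -big_split /=; apply: le_trans (nrm_sum _ _ _) _; apply: ler_sum => j _.
by rewrite -mulrzBr -mulrzDr nrmMz ler_wpM2l ?nrm_ge0.
Qed.

Lemma avg_potential_rmul i : exists B, forall g,
  nrm (avg_potential (g ** gen i) - act (avg_potential g) (gen i)) <= B.
Proof.
have [B BP] := potential_rmul i.
exists (\sum_(l < n) \sum_j nrm (act (e l) (inv (rep j))) * B) => g.
rewrite /avg_potential act_sum -sumrB; apply: le_trans (nrm_sum _ _ _) _.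
apply: ler_sum => l _; rewrite act_sum [X in _ - X](reindex_cls_lmul _ (gen i)) -sumrB.
apply: le_trans (nrm_sum _ _ _) _; apply: ler_sum => j _.
rewrite actMz act_inv_rep_cls actM ginvM gmulrVK -mulrzBr nrmMz.
by rewrite ler_wpM2l ?nrm_ge0.
Qed.

Lemma exists_cob_bounded :
  exists phi, rbounded (cob sigma phi) /\ lbounded (cob sigma phi).
Proof.
have M_gt0 : (0 < M)%N by rewrite muln_gt0 N_gt0 andbT; apply/card_gt0P; exists (cls one).
have [phi [C phiC]] := cob_mulrn_bound sigma avg_potential M_gt0.
exists phi; split.
- apply: rbounded_gen (cob_cocycle phi csigma) _ => i.
  have [B BP] := avg_potential_rmul i.
  exists (B + Lb * M%:Z + nrm (avg_potential (gen i)) + C) => g.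
  apply: le_trans (phiC g (gen i)) _; rewrite lerD2r /coboundary.
  have -> : sigma g (gen i) *+ M - (act (avg_potential g) (gen i) + avg_potential (gen i)
      - avg_potential (g ** gen i)) = avg_potential (g ** gen i)
      - act (avg_potential g) (gen i) + sigma g (gen i) *+ M - avg_potential (gen i).
    by zmod_ring.
  apply: le_trans (nrmB _ _) _; rewrite lerD2r; apply: le_trans (nrmD _ _) _.
  by rewrite lerD // nrmMn ler_wpM2r.
- apply: lbounded_gen (cob_cocycle phi csigma) _ => i.
  have [B BP] := avg_potential_lmul i.
  exists (B + nrm (avg_potential (gen i)) + C) => h.
  apply: le_trans (phiC (gen i) h) _; rewrite lerD2r /coboundary.
  have -> : sigma (gen i) h *+ M - (act (avg_potential (gen i)) h + avg_potential h
      - avg_potential (gen i ** h)) = avg_potential (gen i ** h) - avg_potential h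
      + sigma (gen i) h *+ M - act (avg_potential (gen i)) h.
    by zmod_ring.
  by apply: le_trans (nrmB _ _) _; rewrite nrm_act lerD2r.
Qed.

End Construction.

Lemma cohomologous_bounded (iv : I -> I) sigma :
  (forall i, gen (iv i) = inv (gen i)) -> cocycle2 L act sigma ->
  rbounded sigma \/ lbounded sigma ->
  exists sigma', [/\ cocycle2 L act sigma', cohomologous L act sigma sigma',
                     rbounded sigma' & lbounded sigma'].
Proof.
move=> genV.
have rcase tau : cocycle2 L act tau -> rbounded tau ->
    exists sigma', [/\ cocycle2 L act sigma', cohomologous L act tau sigma',
                       rbounded sigma' & lbounded sigma'].
  move=> ctau rtau; have [Lb LbP] := rbounded_gen_uniform rtau.
  have [phi [rphi lphi]] := exists_cob_bounded genV ctau rtau LbP.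
  by exists (cob tau phi); split=> //; [apply: cob_cocycle | apply: cohomologous_cob].
move=> csigma [rsigma | lsigma]; first exact: rcase.
have [sigma' [c' coh' r' l']] :=
  rcase _ (cob_cocycle _ csigma) (lbounded_dual csigma lsigma).
by exists sigma'; split=> //; apply: cohomologous_trans (cohomologous_cob _ _) coh'.
Qed.

End Generators.

End InvariantNorm.
End Cocycles.

Theorem theorem4p1 (G : Type) (L : group_law G) (A : zmodType)
  (act : A -> G -> A) (sigma : G -> G -> A) :
  fin_gen_group L -> fin_gen_zmod A -> is_action L act -> finite_image act ->
  cocycle2 L act sigma ->
  (right_weakly_bounded sigma \/ left_weakly_bounded sigma) ->
  exists sigma' : G -> G -> A,
    [/\ cocycle2 L act sigma', cohomologous L act sigma sigma',
        right_weakly_bounded sigma' & left_weakly_bounded sigma'].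
Proof.
move=> fgG fgA [act1 actM actD] finA csigma bounded.
have [I [gen [iv [genV gen_all]]]] := fin_gen_group_words fgG.
have [Q [cls [rep [repK clsP]]]] := finite_image_classes finA.
have [n [lam [e [N [N_gt0 lamE]]]]] := fin_gen_zmod_coords fgA.
have mod_reps := fin_gen_zmod_mod_reps fgA.
have rP := rboundedP act1 repK clsP N_gt0 lamE mod_reps.
have lP := lboundedP act1 repK clsP N_gt0 lamE mod_reps.
have [|sigma' [csigma' coh /rP rsigma' /lP lsigma']] :=
  cohomologous_bounded act1 actM actD repK clsP N_gt0 lamE mod_reps gen_all genV csigma.
  by case: bounded => [/rP | /lP]; [left | right].
by exists sigma'.
Qed.
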